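(* Let $j_0\ge1$ be an integer, $M>0$ and $L>2$. Let $(a_j)_{j\ge1}$, $(b_j)_{j\ge0}$, $(d_j)_{j\ge0}$ be sequences of nonnegative real numbers such that $a_{j_0}\le M$, $b_{j_0}\le M$, $d_{j_0}\le M$, and for all $j\ge j_0+1$: $$b_j\le b_{j-1},\qquad a_j+b_j\le L\,a_{j-1},\qquad d_j\le M2^{-j},$$ and $$\text{if } a_j\ge\tfrac12 a_{j-1}\ \text{and}\ a_j\ge\max\{2^{-j},d_{j-1}\},\ \text{then } b_j\le L(b_{j-1}-b_j).$$ Then there exist $\theta=\theta(L)\in(1/2,1)$ depending only on $L$ and $C_0=C_0(L,j_0)$ depending only on $L$ and $j_0$ such that $$b_{j+1}\le C_0(M+1)\big(\theta^j+j\theta^j\big)\qquad\text{for all } j\ge j_0+1.$$ *)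

From Stdlib Require Export Reals.
Open Scope R_scope.

From Stdlib Require Import Reals Lra Lia.
Open Scope R_scope.

(* Put q := L / (1 + L) and fix n with L q^n <= 1/2.  On a step where a_j is
   neither halved nor below the threshold max(2^-j, d_(j-1)), the hypothesis
   b_j <= L (b_(j-1) - b_j) gives b_j <= q b_(j-1), so the potential a_j b_j^n
   is multiplied by at most L q^n <= 1/2; on a halving step it is halved since
   b is nonincreasing; on a threshold step it is O((M+1)^(n+1) 2^-j) outright.
   Hence a_j b_j^n = O((M+1)^(n+1) 2^-j), and as b_(j+1) <= L a_j and
   b_(j+1) <= b_j, also b_(j+1)^(n+1) <= L a_j b_j^n.  Taking (n+1)-th roots
   yields decay at any rate theta with theta^(n+1) >= 1/2, e.g. (Bernoulli)
   theta = 1 - 1/(2(n+1)). *)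

Lemma pow_incr_inv (n : nat) (x y : R) :
  0 <= x -> 0 <= y -> x ^ S n <= y ^ S n -> x <= y.
Proof.
  intros Hx Hy Hxy.
  destruct (Rle_lt_dec x y) as [Hle | Hlt]; [exact Hle |].
  assert (Hyx : y ^ n <= x ^ n) by (apply pow_incr; lra).
  assert (0 < x ^ n) by (apply pow_lt; lra).
  simpl in Hxy; nra.
Qed.

Lemma pow_add_le_r (x : R) (p m : nat) : 0 <= x <= 1 -> x ^ (p + m) <= x ^ m.
Proof.
  intros Hx; rewrite pow_add.
  assert (x ^ p <= 1) by (rewrite <- (pow1 p); apply pow_incr; lra).
  assert (0 <= x ^ m) by (apply pow_le; lra).
  nra.
Qed.

Lemma bernoulli_sub (m : nat) (e : R) : 0 <= e <= 1 -> 1 - INR m * e <= (1 - e) ^ m.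
Proof.
  intros He; induction m as [| m IH].
  - simpl; lra.
  - rewrite S_INR; simpl.
    pose proof (pos_INR m).
    assert (0 <= (1 - e) * ((1 - e) ^ m - (1 - INR m * e))) by (apply Rmult_le_pos; lra).
    assert (0 <= INR m * (e * e)) by (apply Rmult_le_pos; nra).
    nra.
Qed.

Lemma exists_pow_le (q c : R) : 0 <= q < 1 -> 0 < c -> exists n, (1 <= n)%nat /\ q ^ n <= c.
Proof.
  intros Hq Hc.
  destruct (pow_lt_1_zero q ltac:(rewrite Rabs_right; lra) c Hc) as [N HN].
  exists (S N); split; [lia |].
  specialize (HN (S N) ltac:(lia)).
  rewrite Rabs_right in HN by (apply Rle_ge, pow_le; lra).
  lra.
Qed.

Lemma le_ratio_of_le_mul_sub (L x y : R) : 0 < L -> x <= L * (y - x) -> x <= L / (1 + L) * y.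
Proof.
  intros HL Hxy.
  apply (Rmult_le_reg_r (1 + L)); [lra |].
  replace (L / (1 + L) * y * (1 + L)) with (L * y) by (field; lra).
  lra.
Qed.

Lemma halving_or_geometric (P : nat -> R) (K : R) :
  P 0%nat <= K ->
  (forall k, P (S k) <= / 2 * P k \/ P (S k) <= K * (/ 2) ^ S k) ->
  forall k, P k <= K * (/ 2) ^ k.
Proof.
  intros H0 Hstep k; induction k as [| k IH].
  - simpl; lra.
  - destruct (Hstep k); simpl in *; lra.
Qed.

Lemma exists_contraction_exponent (L : R) :
  0 < L -> exists n, (1 <= n)%nat /\ L * (L / (1 + L)) ^ n <= / 2.
Proof.
  intros HL.
  destruct (exists_pow_le (L / (1 + L)) (/ (2 * L))) as [n [Hn Hqn]].
  - split; [apply Rlt_le, Rdiv_lt_0_compat; lra |].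
    apply (Rmult_lt_reg_r (1 + L)); [lra |].
    unfold Rdiv; rewrite Rmult_assoc, Rinv_l; lra.
  - apply Rinv_0_lt_compat; lra.
  - exists n; split; [assumption |].
    replace (/ 2) with (L * / (2 * L)) by (field; lra).
    apply Rmult_le_compat_l; lra.
Qed.

Definition rate (m : nat) : R := 1 - / (2 * INR m).

Lemma rate_bounds (m : nat) : (2 <= m)%nat -> 1 / 2 < rate m < 1.
Proof.
  intros Hm; unfold rate.
  assert (2 <= INR m) by (apply (le_INR 2); lia).
  assert (0 < / (2 * INR m)) by (apply Rinv_0_lt_compat; lra).
  assert (/ (2 * INR m) <= / 4) by (apply Rinv_le_contravar; lra).
  lra.
Qed.

Lemma rate_ge_half (m : nat) : (1 <= m)%nat -> / 2 <= rate m.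
Proof.
  intros Hm; unfold rate.
  assert (1 <= INR m) by (apply (le_INR 1); lia).
  assert (/ (2 * INR m) <= / 2) by (apply Rinv_le_contravar; lra).
  lra.
Qed.

Lemma half_le_rate_pow (m : nat) : (1 <= m)%nat -> / 2 <= rate m ^ m.
Proof.
  intros Hm.
  assert (1 <= INR m) by (apply (le_INR 1); lia).
  assert (/ (2 * INR m) <= / 2) by (apply Rinv_le_contravar; lra).
  assert (0 < / (2 * INR m)) by (apply Rinv_0_lt_compat; lra).
  eapply Rle_trans; [| apply bernoulli_sub; lra].
  right; field; lra.
Qed.

Lemma root_of_geometric_bound (n k : nat) (x c y theta : R) :
  0 <= x -> 1 <= c -> 0 <= y -> 0 <= theta -> / 2 <= theta ^ S n ->
  x ^ S n <= c * y ^ S n * (/ 2) ^ k -> x <= c * y * theta ^ k.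
Proof.
  intros Hx Hc Hy Ht Hhalf Hxn.
  apply (pow_incr_inv n); [assumption | apply Rmult_le_pos; [nra | now apply pow_le] |].
  rewrite !Rpow_mult_distr, <- pow_mult, Nat.mul_comm, pow_mult.
  apply (Rle_trans _ _ _ Hxn).
  assert (c <= c ^ S n) by (simpl; pose proof (pow_R1_Rle c n); nra).
  assert ((/ 2) ^ k <= (theta ^ S n) ^ k) by (apply pow_incr; lra).
  assert (0 <= y ^ S n) by now apply pow_le.
  assert (0 <= (/ 2) ^ k) by (apply pow_le; lra).
  apply Rmult_le_compat; [nra | assumption | apply Rmult_le_compat_r; assumption | assumption].
Qed.

Lemma rate_shift_bound (x c y theta : R) (p k : nat) :
  0 <= c -> 0 <= y -> / 2 <= theta -> x <= c * y * theta ^ k ->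
  x <= c * 2 ^ p * y * (theta ^ (p + k) + INR (p + k) * theta ^ (p + k)).
Proof.
  intros Hc Hy Ht Hx.
  assert (Hshift : theta ^ k <= 2 ^ p * theta ^ (p + k)).
  { rewrite pow_add, <- Rmult_assoc, <- Rpow_mult_distr.
    assert (1 <= (2 * theta) ^ p) by (apply pow_R1_Rle; lra).
    assert (0 <= theta ^ k) by (apply pow_le; lra).
    nra. }
  assert (0 <= c * y) by nra.
  assert (0 <= theta ^ (p + k)) by (apply pow_le; lra).
  assert (0 <= INR (p + k) * theta ^ (p + k)) by (apply Rmult_le_pos; [apply pos_INR | assumption]).
  assert (0 < 2 ^ p) by (apply pow_lt; lra).
  assert (c * y * theta ^ k <= c * y * (2 ^ p * theta ^ (p + k))) by (apply Rmult_le_compat_l; assumption).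
  assert (0 <= c * y * 2 ^ p * (INR (p + k) * theta ^ (p + k))) by (apply Rmult_le_pos; nra).
  nra.
Qed.

Section Potential.

(* The sequences are reindexed so that index k stands for j0 + k, and s k is
   the threshold max(2^-j, d_(j-1)) of step j = j0 + k + 1. *)
Variables (L M : R) (n : nat) (a b s : nat -> R).
Hypotheses (HL : 0 < L) (HM : 0 <= M).
Hypotheses (a_ge0 : forall k, 0 <= a k) (b_ge0 : forall k, 0 <= b k).
Hypotheses (a0_le : a 0%nat <= M) (b0_le : b 0%nat <= M).
Hypothesis b_decr : forall k, b (S k) <= b k.
Hypothesis ab_step : forall k, a (S k) + b (S k) <= L * a k.
Hypothesis s_le : forall k, s k <= 2 * (M + 1) * (/ 2) ^ S k.
Hypothesis good_step :
  forall k, / 2 * a k <= a (S k) -> s k <= a (S k) -> b (S k) <= L * (b k - b (S k)).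
Hypothesis contraction : L * (L / (1 + L)) ^ n <= / 2.

Definition potential (k : nat) : R := a k * b k ^ n.

Lemma b_le_M k : b k <= M.
Proof.
  induction k as [| k IH]; [assumption |].
  pose proof (b_decr k); lra.
Qed.

Lemma potential_step k :
  potential (S k) <= / 2 * potential k \/
  potential (S k) <= 2 * (M + 1) ^ S n * (/ 2) ^ S k.
Proof.
  unfold potential.
  pose proof (a_ge0 k); pose proof (a_ge0 (S k)).
  assert (Hbn : 0 <= b (S k) ^ n) by apply pow_le, b_ge0.
  assert (Hbn' : b (S k) ^ n <= b k ^ n) by (apply pow_incr; split; [apply b_ge0 | apply b_decr]).
  destruct (Rlt_le_dec (a (S k)) (/ 2 * a k)) as [Hhalved | Hnot_halved].
  - left; rewrite <- Rmult_assoc; apply Rmult_le_compat; lra.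
  - destruct (Rlt_le_dec (a (S k)) (s k)) as [Hsmall | Hlarge].
    + right.
      assert (b (S k) ^ n <= (M + 1) ^ n)
        by (apply pow_incr; pose proof (b_le_M (S k)); pose proof (b_ge0 (S k)); lra).
      pose proof (s_le k).
      replace (2 * (M + 1) ^ S n * (/ 2) ^ S k)
        with (2 * (M + 1) * (/ 2) ^ S k * (M + 1) ^ n) by (simpl; ring).
      apply Rmult_le_compat; lra.
    + left.
      set (q := L / (1 + L)) in contraction.
      assert (Hq : 0 <= q) by (unfold q; apply Rlt_le, Rdiv_lt_0_compat; lra).
      assert (Hbq : b (S k) <= q * b k) by (apply le_ratio_of_le_mul_sub, good_step; assumption).
      assert (Hbqn : b (S k) ^ n <= q ^ n * b k ^ n)
        by (rewrite <- Rpow_mult_distr; apply pow_incr; split; [apply b_ge0 | assumption]).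
      assert (Ha : a (S k) <= L * a k) by (pose proof (ab_step k); pose proof (b_ge0 (S k)); lra).
      assert (0 <= q ^ n) by now apply pow_le.
      assert (0 <= a k * b k ^ n) by (apply Rmult_le_pos; [lra | apply pow_le, b_ge0]).
      apply (Rle_trans _ ((L * q ^ n) * (a k * b k ^ n))).
      * replace (L * q ^ n * (a k * b k ^ n)) with ((L * a k) * (q ^ n * b k ^ n)) by ring.
        apply Rmult_le_compat; lra.
      * apply Rmult_le_compat_r; assumption.
Qed.

Lemma potential_bound k : potential k <= 2 * (M + 1) ^ S n * (/ 2) ^ k.
Proof.
  apply halving_or_geometric with (P := potential); [| exact potential_step].
  unfold potential; simpl.
  assert (b 0%nat ^ n <= (M + 1) ^ n) by (apply pow_incr; pose proof (b_ge0 0%nat); lra).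
  assert (0 <= b 0%nat ^ n) by apply pow_le, b_ge0.
  assert (0 <= (M + 1) ^ n) by (apply pow_le; lra).
  assert (a 0%nat * b 0%nat ^ n <= (M + 1) * (M + 1) ^ n) by (apply Rmult_le_compat; try apply a_ge0; lra).
  nra.
Qed.

Lemma b_succ_pow_bound k : b (S k) ^ S n <= 2 * L * (M + 1) ^ S n * (/ 2) ^ k.
Proof.
  pose proof (potential_bound k) as Hpot; unfold potential in Hpot.
  assert (Ha : b (S k) <= L * a k) by (pose proof (ab_step k); pose proof (a_ge0 (S k)); lra).
  assert (b (S k) ^ n <= b k ^ n) by (apply pow_incr; split; [apply b_ge0 | apply b_decr]).
  assert (0 <= b (S k) ^ n) by apply pow_le, b_ge0.
  assert (b (S k) ^ S n <= L * (a k * b k ^ n)).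
  { simpl; rewrite <- Rmult_assoc; apply Rmult_le_compat; try apply b_ge0; lra. }
  nra.
Qed.

Lemma b_succ_le_rate (HL2 : 1 <= 2 * L) k : b (S k) <= 2 * L * (M + 1) * rate (S n) ^ k.
Proof.
  apply (root_of_geometric_bound n); [apply b_ge0 | assumption | lra | | |].
  - pose proof (rate_ge_half (S n) ltac:(lia)); lra.
  - apply half_le_rate_pow; lia.
  - apply b_succ_pow_bound.
Qed.

End Potential.

Lemma threshold_bound (M : R) (j0 : nat) (d : nat -> R) :
  0 <= M -> d j0 <= M -> (forall k, d (j0 + S k)%nat <= M * (/ 2) ^ (j0 + S k)) ->
  forall k, Rmax ((/ 2) ^ (j0 + S k)) (d (j0 + k)%nat) <= 2 * (M + 1) * (/ 2) ^ S k.
Proof.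
  intros HM Hd0 Hd k.
  assert (Hhalf : 0 <= / 2 <= 1) by lra.
  assert (0 <= (/ 2) ^ k) by (apply pow_le; lra).
  apply Rmax_lub.
  - pose proof (pow_add_le_r (/ 2) j0 (S k) Hhalf); simpl in *; nra.
  - destruct k as [| k].
    + rewrite Nat.add_0_r; simpl; lra.
    + pose proof (pow_add_le_r (/ 2) j0 (S k) Hhalf).
      pose proof (Hd k); simpl in *; nra.
Qed.

Theorem lemma3p2 :
  forall L : R, 2 < L ->
  exists theta : R, 1/2 < theta < 1 /\
  forall j0 : nat, (1 <= j0)%nat ->
  exists C0 : R,
  forall (M : R) (a b d : nat -> R),
    0 < M ->
    (forall j, (1 <= j)%nat -> 0 <= a j) ->
    (forall j, 0 <= b j) ->
    (forall j, 0 <= d j) ->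
    a j0 <= M -> b j0 <= M -> d j0 <= M ->
    (forall j, (j0 + 1 <= j)%nat ->
       b j <= b (j - 1)%nat /\
       a j + b j <= L * a (j - 1)%nat /\
       d j <= M * (/ 2) ^ j /\
       ((a j >= / 2 * a (j - 1)%nat /\ a j >= Rmax ((/ 2) ^ j) (d (j - 1)%nat)) ->
          b j <= L * (b (j - 1)%nat - b j))) ->
    forall j, (j0 + 1 <= j)%nat ->
      b (j + 1)%nat <= C0 * (M + 1) * (theta ^ j + INR j * theta ^ j).
Proof.
  intros L HL.
  destruct (exists_contraction_exponent L) as [n [Hn Hcontr]]; [lra |].
  exists (rate (S n)); split; [apply rate_bounds; lia |].
  intros j0 Hj0; exists (2 * L * 2 ^ j0).
  intros M a b d HM Ha Hb Hd Ha0 Hb0 Hd0 H j Hj.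
  assert (Hstep : forall k,
    b (j0 + S k)%nat <= b (j0 + k)%nat /\
    a (j0 + S k)%nat + b (j0 + S k)%nat <= L * a (j0 + k)%nat /\
    d (j0 + S k)%nat <= M * (/ 2) ^ (j0 + S k) /\
    ((a (j0 + S k)%nat >= / 2 * a (j0 + k)%nat /\
      a (j0 + S k)%nat >= Rmax ((/ 2) ^ (j0 + S k)) (d (j0 + k)%nat)) ->
       b (j0 + S k)%nat <= L * (b (j0 + k)%nat - b (j0 + S k)%nat))).
  { intros k; replace (j0 + k)%nat with (j0 + S k - 1)%nat by lia; apply H; lia. }
  destruct (Nat.le_exists_sub j0 j ltac:(lia)) as [k [-> _]].
  rewrite (Nat.add_comm k j0), Nat.add_1_r, <- Nat.add_succ_r.
  apply (rate_shift_bound _ _ _ _ j0 k); [lra | lra | apply rate_ge_half; lia |].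
  apply (b_succ_le_rate L M n (fun i => a (j0 + i)%nat) (fun i => b (j0 + i)%nat)
           (fun i => Rmax ((/ 2) ^ (j0 + S i)) (d (j0 + i)%nat))); cbv beta; try lra.
  - intros i; apply Ha; lia.
  - intros i; apply Hb.
  - rewrite Nat.add_0_r; assumption.
  - rewrite Nat.add_0_r; assumption.
  - intros i; apply Hstep.
  - intros i; apply Hstep.
  - apply threshold_bound; [lra | assumption | intros i; apply Hstep].
  - intros i H1 H2; apply Hstep; split; lra.
Qed.
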